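(* Let $n\geq 4$, let $B\subset\mathbb{R}^{n+1}$ be a symmetric convex body and let $\Gamma_1,\Gamma_2\subset\mathbb{R}^{n+1}$ be two distinct linear hyperplanes such that $K_i=\Gamma_i\cap B$ ($i=1,2$) are affine symmetric bodies of revolution with axes of revolution $L_i$ and associated hyperplanes of revolution $H_i\subset\Gamma_i$. If $L_1\subset H_2$, then $K_1$ is an ellipsoid.
   Context: A symmetric convex body is a compact convex set with nonempty interior invariant under $x\mapsto-x$. A symmetric convex body $K\subset\mathbb{R}^m$ is a symmetric body of revolution if it admits an axis of revolution: a 1-dimensional linear subspace $L$ such that every section of $K$ by an affine hyperplane $A$ orthogonal to $L$ is a closed Euclidean $(m-1)$-ball in $A$ centered at $A\cap L$ (possibly empty or a point); $L^\perp$ is the associated hyperplane of revolution. An affine symmetric body of revolution (in an $m$-dimensional linear subspace) is a convex body linearly equivalent to a symmetric body of revolution; the images of an axis and its associated hyperplane under the linear equivalence are called an axis and associated hyperplane of revolution of it. An ellipsoid is a set affinely equivalent to a closed Euclidean unit ball. *)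

From Stdlib Require Import Reals List.
From mathcomp Require Import ssreflect ssrfun ssrbool eqtype ssrnat seq fintype bigop.

Open Scope R_scope.

Definition vec (m : nat) := 'I_m -> R.
Definition vset (m : nat) := vec m -> Prop.

Definition vzero {m} : vec m := fun _ => 0.
Definition vadd {m} (x y : vec m) : vec m := fun i => x i + y i.
Definition vscale {m} (c : R) (x : vec m) : vec m := fun i => c * x i.
Definition vopp {m} (x : vec m) : vec m := fun i => - x i.
Definition vsub {m} (x y : vec m) : vec m := fun i => x i - y i.
Definition dot {m} (x y : vec m) : R := \big[Rplus/0]_(i < m) (x i * y i).
Definition vnorm {m} (x : vec m) : R := sqrt (dot x x).

Definition is_open {m} (U : vset m) : Prop :=
  forall x, U x -> exists r, 0 < r /\ forall y, vnorm (vsub y x) < r -> U y.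

Definition is_compact {m} (K : vset m) : Prop :=
  forall (I : Type) (U : I -> vset m),
    (forall i, is_open (U i)) ->
    (forall x, K x -> exists i, U i x) ->
    exists l : list I, forall x, K x -> exists i, In i l /\ U i x.

Definition is_convex {m} (K : vset m) : Prop :=
  forall x y t, K x -> K y -> 0 <= t <= 1 ->
    K (vadd (vscale (1 - t) x) (vscale t y)).

Definition nonempty_interior {m} (K : vset m) : Prop :=
  exists x r, 0 < r /\ forall y, vnorm (vsub y x) < r -> K y.

Definition is_symmetric {m} (K : vset m) : Prop := forall x, K x -> K (vopp x).

Definition sym_convex_body {m} (K : vset m) : Prop :=
  is_compact K /\ is_convex K /\ nonempty_interior K /\ is_symmetric K.

Definition lin_hyperplane {m} (G : vset m) : Prop :=
  exists a : vec m, a <> vzero /\ forall x, G x <-> dot a x = 0.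

(* L = span u (u <> 0); the affine
   hyperplanes orthogonal to L are A_c = {x | <x,u> = c <u,u>}, with
   A_c /\ L = {c u}. *)
Definition axis_of_revolution {m} (K L H : vset m) : Prop :=
  exists u : vec m, u <> vzero /\
    (forall x, L x <-> exists t, x = vscale t u) /\
    (forall x, H x <-> dot x u = 0) /\
    forall c : R,
      (forall x, dot x u = c * dot u u -> ~ K x) \/
      exists r, 0 <= r /\
        forall x, dot x u = c * dot u u ->
          (K x <-> vnorm (vsub x (vscale c u)) <= r).

Definition sym_body_of_revolution {m} (K : vset m) : Prop :=
  sym_convex_body K /\ exists L H, axis_of_revolution K L H.

Definition image {m N} (T : vec m -> vec N) (S : vset m) : vset N :=
  fun y => exists x, S x /\ T x = y.

Definition is_linear {m N} (T : vec m -> vec N) : Prop :=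
  (forall x y, T (vadd x y) = vadd (T x) (T y)) /\
  (forall c x, T (vscale c x) = vscale c (T x)).

Definition affine_sym_body_of_revolution (m N : nat) (V K L H : vset N) : Prop :=
  exists (T : vec m -> vec N) (K' L' H' : vset m),
    is_linear T /\ injective T /\ (forall y, V y <-> exists x, T x = y) /\
    sym_convex_body K' /\ axis_of_revolution K' L' H' /\
    (forall y, K y <-> image T K' y) /\
    (forall y, L y <-> image T L' y) /\
    (forall y, H y <-> image T H' y).

Definition is_ellipsoid (d N : nat) (K : vset N) : Prop :=
  exists (T : vec d -> vec N) (b : vec N),
    is_linear T /\ injective T /\
    forall y, K y <-> exists x, vnorm x <= 1 /\ vadd (T x) b = y.

From Pilot Require Import Defs.
From Stdlib Require Import Reals Lra Psatz FunctionalExtensionality Classical.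
From mathcomp Require Import ssreflect ssrfun ssrbool eqtype ssrnat seq fintype bigop.
From mathcomp Require Import ssralg matrix mxalgebra Rstruct zify.
Open Scope R_scope.

(* Pull both slices K_i = G_i /\ B back to symmetric bodies of revolution
   K1, K2 in R^n along the linear isomorphisms T_i, with axes u1, u2.
   - Since T1 u1 spans L1, which lies in H2 = T2(u2^perp), we have
     T1 u1 = T2 h2 with h2 orthogonal to u2.
   - Dimension count: the conditions T1 p = T2 q, p . u1 = 0, q . u2 = 0 are
     n + 3 linear equations in 2n unknowns, so for n >= 4 there are nonzero
     p, q satisfying them.
   - The plane spanned by (u1, p) in K1 is thus identified with the plane
     spanned by (h2, q) in K2.  The latter lies in u2^perp, where the central
     section of K2 is a Euclidean ball, so K1 meets the plane (u1, p) in the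
     sublevel set {A s^2 + 2 C s t + D t^2 <= r} of a quadratic form.
   - The reflection t -> -t preserves K1 (it rotates around the axis u1), so
     C = 0; rotating the resulting ellipse around u1 shows that K1 is a
     quadric of revolution, i.e. a linear image of the unit ball. *)

Section DotProduct.
Context {m : nat}.
Implicit Types x y z : vec m.

Lemma dot_addl x y z : dot (vadd x y) z = dot x z + dot y z.
Proof. by rewrite /dot /vadd -big_split /=; apply: eq_bigr => i _; ring. Qed.

Lemma dot_scalel c x y : dot (vscale c x) y = c * dot x y.
Proof.
rewrite /dot (big_morph (fun s => c * s) (id1 := 0) (op1 := Rplus)).
- by apply: eq_bigr => i _; rewrite /vscale; ring.
- by move=> a b; ring.
- by ring.
Qed.

Lemma dot_comm x y : dot x y = dot y x.
Proof. by rewrite /dot; apply: eq_bigr => i _; ring. Qed.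

Lemma dot_addr x y z : dot z (vadd x y) = dot z x + dot z y.
Proof. by rewrite dot_comm dot_addl !(dot_comm z). Qed.

Lemma dot_scaler c x y : dot y (vscale c x) = c * dot y x.
Proof. by rewrite dot_comm dot_scalel dot_comm. Qed.

Lemma dot_subl x y z : dot (vsub x y) z = dot x z - dot y z.
Proof.
have -> : vsub x y = vadd x (vscale (-1) y).
  by apply: functional_extensionality => i; rewrite /vsub /vadd /vscale; ring.
by rewrite dot_addl dot_scalel; ring.
Qed.

Lemma dot_zerol y : dot vzero y = 0.
Proof. by rewrite /dot big1 // => i _; rewrite /vzero; ring. Qed.

Lemma dot_ge0 x : 0 <= dot x x.
Proof.
by rewrite /dot; apply: (big_ind (fun s => 0 <= s)) => [|a b Ha Hb|i _]; nra.
Qed.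

Lemma dot_eq0 x : dot x x = 0 -> x = vzero.
Proof.
move=> Hx; apply: functional_extensionality => i; rewrite /vzero.
move: Hx; rewrite /dot (bigD1 i) //=.
set S := (X in _ + X = _) => Hs.
have S_ge0 : 0 <= S.
  by rewrite /S; apply: (big_ind (fun s => 0 <= s)) => [|a b Ha Hb|j _]; nra.
have xi2 : x i * x i = 0 by have := Rle_0_sqr (x i); rewrite /Rsqr; lra.
by case: (Rmult_integral _ _ xi2).
Qed.

Lemma dot_pos x : x <> vzero -> 0 < dot x x.
Proof.
move=> xnz; case: (Rle_lt_or_eq_dec _ _ (dot_ge0 x)) => // /esym /dot_eq0 //.
Qed.

Lemma vnorm_le x r : 0 <= r -> (vnorm x <= r <-> dot x x <= r * r).
Proof.
move=> r0; rewrite /vnorm; have d0 := dot_ge0 x; split => H.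
  by have := sqrt_sqrt _ d0; have := sqrt_pos (dot x x); nra.
by rewrite -(sqrt_square r r0); apply: sqrt_le_1_alt.
Qed.

Lemma vnorm_lt x r : 0 <= r -> dot x x < r * r -> vnorm x < r.
Proof.
move=> r0 H; rewrite /vnorm -(sqrt_square r r0).
by apply: sqrt_lt_1_alt; split => //; apply: dot_ge0.
Qed.

Lemma dot_plane (v w : vec m) (s t : R) :
  dot (vadd (vscale s v) (vscale t w)) (vadd (vscale s v) (vscale t w))
  = dot v v * s * s + 2 * dot v w * s * t + dot w w * t * t.
Proof.
by rewrite !dot_addl !dot_addr !dot_scalel !dot_scaler (dot_comm w v); ring.
Qed.

End DotProduct.

Definition height {m} (u x : vec m) : R := dot x u / dot u u.
Definition radial {m} (u x : vec m) : vec m := vsub x (vscale (height u x) u).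
Definition rad2 {m} (u x : vec m) : R := dot (radial u x) (radial u x).

Section AxialCoordinates.
Context {m : nat} {u : vec m}.
Hypothesis u_nz : u <> vzero.
Implicit Types x y w : vec m.

Let a_pos : 0 < dot u u. Proof. exact: dot_pos. Qed.

Lemma dot_height x : dot x u = height u x * dot u u.
Proof. by rewrite /height; field; lra. Qed.

Lemma radial_orth x : dot (radial u x) u = 0.
Proof. by rewrite /radial dot_subl dot_scalel dot_height; ring. Qed.

Lemma axial_decomp x : vadd (vscale (height u x) u) (radial u x) = x.
Proof.
by apply: functional_extensionality => i; rewrite /radial /vadd /vsub /vscale; ring.
Qed.

Lemma height_axial c w : dot w u = 0 -> height u (vadd (vscale c u) w) = c.
Proof. by move=> wu; rewrite /height dot_addl dot_scalel wu; field; lra. Qed.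

Lemma radial_axial c w : dot w u = 0 -> radial u (vadd (vscale c u) w) = w.
Proof.
move=> wu; rewrite /radial height_axial //.
by apply: functional_extensionality => i; rewrite /vadd /vsub /vscale; ring.
Qed.

Lemma height_add x y : height u (vadd x y) = height u x + height u y.
Proof. by rewrite /height dot_addl; field; lra. Qed.

Lemma height_scale c x : height u (vscale c x) = c * height u x.
Proof. by rewrite /height dot_scalel; field; lra. Qed.

Lemma dot_orth_sum c w :
  dot w u = 0 ->
  dot (vadd (vscale c u) w) (vadd (vscale c u) w) = dot u u * (c * c) + dot w w.
Proof.
by move=> wu; rewrite dot_addl !dot_addr !dot_scalel !dot_scaler (dot_comm u w) wu; ring.
Qed.

Lemma dot_axial x : dot x x = dot u u * (height u x * height u x) + rad2 u x.
Proof. by have := dot_orth_sum (height u x) (radial u x) (radial_orth x); rewrite axial_decomp. Qed.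

End AxialCoordinates.

(* The sections of K by the affine hyperplanes orthogonal to u are (possibly
   empty) closed balls centred on the line spanned by u: this is the last
   clause of [axis_of_revolution]. *)
Definition ball_sections {m} (K : vset m) (u : vec m) : Prop :=
  forall c : R,
    (forall x, dot x u = c * dot u u -> ~ K x) \/
    exists r, 0 <= r /\
      forall x, dot x u = c * dot u u ->
        (K x <-> vnorm (vsub x (vscale c u)) <= r).

Section BallSections.
Context {m : nat} {K : vset m} {u : vec m}.
Hypothesis u_nz : u <> vzero.
Hypothesis K_sec : ball_sections K u.

Lemma section_mono x y :
  height u y = height u x -> rad2 u y <= rad2 u x -> K x -> K y.
Proof.
move=> hyx ryx Kx; case: (K_sec (height u x)) => [empty|[r [r_ge0 Kr]]].
  by case: (empty x (dot_height u_nz x)).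
have := proj1 (Kr x (dot_height u_nz x)) Kx.
rewrite -[vsub x _]/(radial u x) => /vnorm_le-/(_ r_ge0) Hx.
apply/(Kr y); first by rewrite -hyx dot_height.
by rewrite -hyx -[vsub y _]/(radial u y); apply/vnorm_le => //; rewrite /rad2 in ryx; lra.
Qed.

Lemma section_iff x y :
  height u y = height u x -> rad2 u y = rad2 u x -> (K x <-> K y).
Proof.
by move=> hyx ryx; split; apply: section_mono; rewrite ?hyx ?ryx; lra.
Qed.

Lemma central_section_ball :
  K vzero -> exists R, forall w, dot w u = 0 -> (K w <-> dot w w <= R).
Proof.
move=> K0; case: (K_sec 0) => [empty|[r [r_ge0 Kr]]].
  by case: (empty vzero); rewrite ?dot_zerol; first ring.
exists (r * r) => w wu; rewrite Kr; last by rewrite wu; ring.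
have -> : vsub w (vscale 0 u) = w.
  by apply: functional_extensionality => i; rewrite /vsub /vscale; ring.
exact: vnorm_le.
Qed.

End BallSections.

Definition axial_rescale {m} (u : vec m) (c k : R) (x : vec m) : vec m :=
  vadd (vscale c u) (vscale k (radial u x)).

Section AxialRescaling.
Context {m : nat} {u : vec m}.
Hypothesis u_nz : u <> vzero.

Lemma radial_add x y : radial u (vadd x y) = vadd (radial u x) (radial u y).
Proof.
apply: functional_extensionality => i.
by rewrite /radial (height_add u_nz) /vadd /vsub /vscale; ring.
Qed.

Lemma radial_scale c x : radial u (vscale c x) = vscale c (radial u x).
Proof.
apply: functional_extensionality => i.
by rewrite /radial (height_scale u_nz) /vsub /vscale; ring.
Qed.

Lemma height_rescale c k x : height u (axial_rescale u c k x) = c.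
Proof. by apply: (height_axial u_nz); rewrite dot_scalel radial_orth //; ring. Qed.

Lemma radial_rescale c k x : radial u (axial_rescale u c k x) = vscale k (radial u x).
Proof. by apply: (radial_axial u_nz); rewrite dot_scalel radial_orth //; ring. Qed.

Lemma rad2_rescale c k x : rad2 u (axial_rescale u c k x) = k * k * rad2 u x.
Proof. by rewrite /rad2 radial_rescale dot_scalel dot_scaler; ring. Qed.

Lemma axial_rescale_comp c k c' k' x :
  axial_rescale u c k (axial_rescale u c' k' x) = axial_rescale u c (k * k') x.
Proof.
rewrite {1}/axial_rescale radial_rescale; congr vadd.
by apply: functional_extensionality => i; rewrite /vscale; ring.
Qed.

Lemma axial_rescale_id x : axial_rescale u (height u x) 1 x = x.
Proof.
rewrite /axial_rescale -{3}(@axial_decomp _ u x); congr vadd.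
by apply: functional_extensionality => i; rewrite /vscale; ring.
Qed.

End AxialRescaling.

Definition ball_image {m} (K : vset m) : Prop :=
  exists S : vec m -> vec m, is_linear S /\ injective S /\
    forall x, K x <-> exists y, vnorm y <= 1 /\ S y = x.

(* A quadric of revolution  alpha h^2 + beta |radial part|^2 <= 1  is a centred
   ellipsoid: rescale the height by sqrt (|u|^2 / alpha) and the radial part
   by sqrt (1 / beta). *)
Lemma quadric_ball_image {m} (u : vec m) (alpha beta : R) :
  u <> vzero -> 0 < alpha -> 0 < beta ->
  ball_image (fun x => alpha * (height u x * height u x) + beta * rad2 u x <= 1).
Proof.
move=> u_nz alpha_pos beta_pos; have a_pos := dot_pos _ u_nz.
pose k1 := sqrt (dot u u / alpha); pose k2 := sqrt (/ beta).
have k1_pos : 0 < k1 by apply: sqrt_lt_R0; apply: Rdiv_lt_0_compat.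
have k2_pos : 0 < k2 by apply: sqrt_lt_R0; apply: Rinv_0_lt_compat.
have k1k1 : k1 * k1 = dot u u / alpha by apply: sqrt_sqrt; apply/Rlt_le/Rdiv_lt_0_compat.
have k2k2 : k2 * k2 = / beta by apply: sqrt_sqrt; apply/Rlt_le/Rinv_0_lt_compat.
pose S y := axial_rescale u (k1 * height u y) k2 y.
pose Si x := axial_rescale u (height u x / k1) (/ k2) x.
have SiK : cancel S Si.
  move=> y; rewrite /Si /S (height_rescale u_nz) (axial_rescale_comp u_nz).
  have -> : k1 * height u y / k1 = height u y by field; lra.
  by rewrite Rinv_l ?axial_rescale_id //; lra.
have SKi : cancel Si S.
  move=> x; rewrite /Si /S (height_rescale u_nz) (axial_rescale_comp u_nz).
  have -> : k1 * (height u x / k1) = height u x by field; lra.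
  by rewrite Rinv_r ?axial_rescale_id //; lra.
rewrite /ball_image /is_linear; exists S; split; [split|split; [exact: can_inj SiK|]].
- move=> x y; apply: functional_extensionality => i.
  by rewrite /S /axial_rescale (height_add u_nz) (radial_add u_nz) /vadd /vscale; ring.
- move=> c x; apply: functional_extensionality => i.
  by rewrite /S /axial_rescale (height_scale u_nz) (radial_scale u_nz) /vadd /vscale; ring.
- move=> x; split => [Hx|[y [y_le1 <-]]].
  + exists (Si x); split => //; apply/vnorm_le; first lra.
    rewrite (dot_axial u_nz) /Si (height_rescale u_nz) (rad2_rescale u_nz).
    set h := height u x.
    have e1 : / k2 * / k2 = beta by rewrite -Rinv_mult k2k2 Rinv_inv.
    have e2 : dot u u * (h / k1 * (h / k1)) = alpha * (h * h).
      transitivity (dot u u * (h * h) / (k1 * k1)); first by field; lra.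
      by rewrite k1k1; field; lra.
    by rewrite e1 e2 Rmult_1_r.
  + move/vnorm_le: y_le1 => /(_ ltac:(lra)); rewrite (dot_axial u_nz) => y_le1.
    rewrite /S (height_rescale u_nz) (rad2_rescale u_nz); set h := height u y.
    have e1 : alpha * (k1 * h * (k1 * h)) = dot u u * (h * h).
      transitivity (alpha * (k1 * k1) * (h * h)); first by ring.
      by rewrite k1k1; field; lra.
    have e2 : beta * (k2 * k2 * rad2 u y) = rad2 u y by rewrite k2k2; field; lra.
    by rewrite e1 e2 /h; lra.
Qed.

Definition ei {m} (l : 'I_m) : vec m := fun i => if i == l then 1 else 0.

Lemma vscale0 {m} : vscale 0 (vzero : vec m) = vzero.
Proof. by apply: functional_extensionality => i; rewrite /vscale /vzero; ring. Qed.

Lemma linear_zero {m N} (T : vec m -> vec N) : is_linear T -> T vzero = vzero.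
Proof.
case=> _ T_scale; rewrite -vscale0 T_scale.
by apply: functional_extensionality => i; rewrite /vscale /vzero; ring.
Qed.

Lemma linear_injective_nz {m N} {T : vec m -> vec N} {x : vec m} :
  is_linear T -> injective T -> x <> vzero -> T x <> vzero.
Proof. by move=> T_lin T_inj xnz Tx0; apply: xnz; apply: T_inj; rewrite Tx0 linear_zero. Qed.

Lemma linear_form_decomp m (g : vec m -> R) :
  (forall x y, g (vadd x y) = g x + g y) -> (forall c x, g (vscale c x) = c * g x) ->
  forall x, g x = \big[Rplus/0]_(l < m) (x l * g (ei l)).
Proof.
move=> g_add g_scale x.
have Ex : x = \big[vadd/vzero]_(l < m) vscale (x l) (ei l).
  apply: functional_extensionality => i.
  rewrite (big_morph (fun v : vec m => v i) (id1 := 0) (op1 := Rplus)) //.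
  rewrite (bigD1 i) //= big1 /vscale /ei ?eqxx; first ring.
  by move=> l Hl; rewrite eq_sym (negbTE Hl); ring.
rewrite {1}Ex (big_morph g (id1 := 0) (op1 := Rplus)) //.
  by apply: eq_bigr => l _; rewrite g_scale.
by rewrite -vscale0 g_scale; ring.
Qed.

(* A homogeneous system of fewer linear equations than unknowns has a nonzero
   solution (via the rank-nullity theorem for real matrices). *)
Lemma linear_system_nontrivial (m : nat) (I : finType) (f : I -> vec m -> R) :
  (#|I| < m)%N ->
  (forall j x y, f j (vadd x y) = f j x + f j y) ->
  (forall j c x, f j (vscale c x) = c * f j x) ->
  exists x, x <> vzero /\ forall j, f j x = 0.
Proof.
move=> card_lt f_add f_scale.
pose A : 'M[R]_(m, #|I|) := (\matrix_(i, j) f (enum_val j) (ei i))%R.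
have ker_rank : (0 < \rank (kermx A))%N.
  by rewrite mxrank_ker subn_gt0; exact: leq_ltn_trans (rank_leq_col A) card_lt.
have ker_nz : kermx A != 0%R by rewrite -mxrank_eq0 -lt0n.
have [i [k Hik]] : exists i k, kermx A i k <> 0.
  apply: NNPP => Hn; move/negP: ker_nz; apply; apply/eqP/matrixP => i k.
  rewrite [RHS]mxE; apply: NNPP => H; apply: Hn; exists i, k => E; exact: H E.
exists (fun l => kermx A i l); split.
  by move=> E; apply: Hik; have := congr1 (fun v : vec m => v k) E.
move=> j; rewrite (@linear_form_decomp m (f j) (f_add j) (f_scale j)).
have := congr1 (fun M : 'M[R]_(_, _) => M i (enum_rank j)) (mulmx_ker A).
rewrite /= !mxE => E; rewrite -[RHS]E.
by apply: eq_bigr => l _; rewrite /A [X in _ = (_ * X)%R]mxE enum_rankK.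
Qed.

(* Two injective linear maps R^m -> R^N with N + 2 < 2m send some nonzero
   vector orthogonal to u1 and some nonzero vector orthogonal to u2 to the
   same point: N + 2 linear conditions on 2m unknowns. *)
Lemma common_orthogonal_direction {m N} {T1 T2 : vec m -> vec N} (u1 u2 : vec m) :
  is_linear T1 -> injective T1 -> is_linear T2 -> injective T2 ->
  (N + 2 < m + m)%N ->
  exists p q, p <> vzero /\ q <> vzero /\
    dot p u1 = 0 /\ dot q u2 = 0 /\ T1 p = T2 q.
Proof.
move=> T1_lin T1_inj T2_lin T2_inj dim_lt.
have [T1_add T1_scale] := T1_lin; have [T2_add T2_scale] := T2_lin.
pose pl (z : vec (m + m)) : vec m := fun i => z (lshift m i).
pose pr (z : vec (m + m)) : vec m := fun i => z (rshift m i).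
pose f (j : ('I_N + bool)%type) (z : vec (m + m)) : R :=
  match j with
  | inl k => T1 (pl z) k - T2 (pr z) k
  | inr true => dot (pl z) u1
  | inr false => dot (pr z) u2
  end.
have [z [z_nz fz]] : exists z, z <> vzero /\ forall j, f j z = 0.
  apply: linear_system_nontrivial.
  - by rewrite card_sum card_ord card_bool.
  - move=> [k|[]] x y /=; [|exact: dot_addl..].
    rewrite -[pl _]/(vadd (pl x) (pl y)) -[pr _]/(vadd (pr x) (pr y)).
    by rewrite T1_add T2_add /vadd; ring.
  - move=> [k|[]] c x /=; [|exact: dot_scalel..].
    rewrite -[pl _]/(vscale c (pl x)) -[pr _]/(vscale c (pr x)).
    by rewrite T1_scale T2_scale /vscale; ring.
have Tpq : T1 (pl z) = T2 (pr z).
  by apply: functional_extensionality => k; have := fz (inl k); rewrite /=; lra.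
have pl_nz : pl z <> vzero.
  move=> p0; apply: z_nz.
  have q0 : pr z = vzero by apply: T2_inj; rewrite -Tpq p0 !linear_zero.
  apply: functional_extensionality => i; rewrite -(splitK i).
  case: (split i) => k /=.
    by have := congr1 (fun v : vec m => v k) p0.
  by have := congr1 (fun v : vec m => v k) q0.
exists (pl z), (pr z); split; [|split; [|split; [|split]]] => //.
- by move=> q0; apply: pl_nz; apply: T1_inj; rewrite Tpq q0 !linear_zero.
- exact: (fz (inr true)).
- exact: (fz (inr false)).
Qed.

Lemma ball_center_mem {m} {K : vset m} {x0 : vec m} {rho : R} :
  0 < rho -> (forall y, vnorm (vsub y x0) < rho -> K y) -> K x0.
Proof.
move=> rho_pos ball; apply: ball; apply: vnorm_lt; first lra.
have -> : vsub x0 x0 = vzero.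
  by apply: functional_extensionality => i; rewrite /vsub /vzero; ring.
by rewrite dot_zerol; nra.
Qed.

(* A symmetric convex body contains the origin, the midpoint of x and -x. *)
Lemma sym_convex_body_zero {m} {K : vset m} : sym_convex_body K -> K vzero.
Proof.
case=> _ [K_conv [[x0 [rho [rho_pos ball]]] K_sym]].
have Kx0 := ball_center_mem rho_pos ball.
have := K_conv _ _ (/ 2) Kx0 (K_sym _ Kx0) ltac:(lra).
have -> // : vadd (vscale (1 - / 2) x0) (vscale (/ 2) (vopp x0)) = vzero.
by apply: functional_extensionality => i; rewrite /vadd /vscale /vopp /vzero; field.
Qed.

(* A set with nonempty interior is not contained in the hyperplane u^perp:
   if the centre x0 of a ball in K lies there, x0 + k u does not. *)
Lemma interior_off_hyperplane {m} {K : vset m} {u : vec m} :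
  u <> vzero -> nonempty_interior K -> exists x, K x /\ height u x <> 0.
Proof.
move=> u_nz [x0 [rho [rho_pos ball]]]; have a_pos := dot_pos _ u_nz.
pose k := rho / (dot u u + 1).
have k_pos : 0 < k by apply: Rdiv_lt_0_compat; lra.
have Kx1 : K (vadd x0 (vscale k u)).
  apply: ball; apply: vnorm_lt; first lra.
  have -> : vsub (vadd x0 (vscale k u)) x0 = vscale k u.
    by apply: functional_extensionality => i; rewrite /vsub /vadd /vscale; ring.
  rewrite dot_scalel dot_scaler /k.
  have a_lt : dot u u < (dot u u + 1) * (dot u u + 1) by nra.
  apply: (Rmult_lt_reg_r ((dot u u + 1) * (dot u u + 1))); first nra.
  by field_simplify; nra.
have Kx0 := ball_center_mem rho_pos ball.
have [h0|h0] := Req_dec (height u x0) 0; last by exists x0.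
exists (vadd x0 (vscale k u)); split => //.
have hu1 : height u u = 1 by rewrite /height; field; lra.
by rewrite (height_add u_nz) (height_scale u_nz) h0 hu1; lra.
Qed.

(* A binary quadratic form whose sublevel set {Q <= r} (r > 0) is invariant
   under t -> -t has no mixed term: otherwise the points (l, l) and (l, -l)
   with (A + D) l^2 = r lie on different sides of the level r. *)
Lemma quadratic_form_even (A C D r : R) :
  0 < A + D -> 0 < r ->
  (forall s t, A*s*s + 2*C*s*t + D*t*t <= r -> A*s*s + 2*C*s*(-t) + D*(-t)*(-t) <= r) ->
  C = 0.
Proof.
move=> AD_pos r_pos even; pose L := r / (A + D).
have L_pos : 0 < L by apply: Rdiv_lt_0_compat.
have LAD : L * (A + D) = r by rewrite /L; field; lra.
pose l := sqrt L; have ll : l * l = L by apply: sqrt_sqrt; lra.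
have Q_plus : A*l*l + 2*C*l*l + D*l*l = r + 2*C*L by rewrite -LAD -ll; ring.
have Q_minus : A*l*l + 2*C*l*(-l) + D*(-l)*(-l) = r - 2*C*L by rewrite -LAD -ll; ring.
have [C_lt|[C_eq|C_gt]] := Rtotal_order C 0 => //; exfalso.
- by have := even l l; rewrite Q_plus Q_minus; nra.
- by have := even l (- l); rewrite Ropp_involutive Q_plus Q_minus; nra.
Qed.

Section RoundPlaneSection.
Context {m : nat} {K : vset m} {u p : vec m} {A C D r : R}.
Hypothesis u_nz : u <> vzero.
Hypothesis K_sec : ball_sections K u.
Hypothesis K_int : nonempty_interior K.
Hypothesis p_nz : p <> vzero.
Hypothesis p_orth : dot p u = 0.
Hypothesis A_pos : 0 < A.
Hypothesis D_pos : 0 < D.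
Hypothesis K_plane : forall s t,
  K (vadd (vscale s u) (vscale t p)) <-> A*s*s + 2*C*s*t + D*t*t <= r.

Let P_pos : 0 < dot p p. Proof. exact: dot_pos. Qed.

Lemma plane_height s t : height u (vadd (vscale s u) (vscale t p)) = s.
Proof. by apply: (height_axial u_nz); rewrite dot_scalel p_orth; ring. Qed.

Lemma plane_rad2 s t : rad2 u (vadd (vscale s u) (vscale t p)) = dot p p * (t * t).
Proof.
rewrite /rad2 (radial_axial u_nz); last by rewrite dot_scalel p_orth; ring.
by rewrite dot_scalel dot_scaler; ring.
Qed.

Lemma plane_section_iff x s t :
  height u x = s -> rad2 u x = dot p p * (t * t) ->
  (K x <-> A*s*s + 2*C*s*t + D*t*t <= r).
Proof.
move=> hx rx; rewrite -K_plane; apply: (section_iff u_nz K_sec).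
  by rewrite plane_height.
by rewrite plane_rad2.
Qed.

Lemma plane_level_pos : 0 < r.
Proof.
have [x [Kx hx_nz]] := interior_off_hyperplane u_nz K_int.
pose h := height u x.
have r_le : rad2 u (vadd (vscale h u) (vscale 0 p)) <= rad2 u x.
  by rewrite plane_rad2; have := dot_ge0 (radial u x); rewrite /rad2; nra.
have K0 := section_mono u_nz K_sec _ _ (plane_height h 0) r_le Kx.
have hh_pos : 0 < h * h by have := Rsqr_pos_lt _ hx_nz.
by move/K_plane: K0; nra.
Qed.

Lemma plane_form_diagonal : C = 0.
Proof.
apply: (quadratic_form_even A C D r); [lra | exact: plane_level_pos |].
move=> s t /K_plane Kst; apply/K_plane.
apply: (section_mono u_nz K_sec _ _ _ _ Kst); rewrite ?plane_height ?plane_rad2 //.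
by rewrite Rmult_opp_opp; lra.
Qed.

Lemma revolution_quadric x :
  K x <-> A * (height u x * height u x) + D / dot p p * rad2 u x <= r.
Proof.
have d_ge0 : 0 <= rad2 u x / dot p p.
  by apply: Rle_mult_inv_pos => //; apply: dot_ge0.
pose t := sqrt (rad2 u x / dot p p); have tt : t * t = rad2 u x / dot p p by exact: sqrt_sqrt.
rewrite (plane_section_iff x (height u x) t) //; last by rewrite tt; field; lra.
have -> : A * height u x * height u x + 2 * C * height u x * t + D * t * t
        = A * (height u x * height u x) + D / dot p p * rad2 u x.
  by rewrite plane_form_diagonal Rmult_assoc (Rmult_assoc D) tt; field; lra.
by [].
Qed.

Lemma round_plane_section_ball_image : ball_image K.
Proof.
have r_pos := plane_level_pos.
have alpha_pos : 0 < A / r by apply: Rdiv_lt_0_compat.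
have beta_pos : 0 < D / (dot p p * r) by apply: Rdiv_lt_0_compat; nra.
have [S [S_lin [S_inj HS]]] := quadric_ball_image u _ _ u_nz alpha_pos beta_pos.
exists S; split => //; split => // x; rewrite revolution_quadric -HS.
set e := A * (height u x * height u x) + D / dot p p * rad2 u x.
have -> : A / r * (height u x * height u x) + D / (dot p p * r) * rad2 u x = e / r.
  by rewrite /e; field; lra.
have er : e / r * r = e by field; lra.
by split => H; nra.
Qed.

End RoundPlaneSection.

Lemma section_preimage {m N} {V B : vset N} {K : vset m} {T : vec m -> vec N} :
  injective T -> (forall y, V y <-> exists x, T x = y) ->
  (forall y, V y /\ B y <-> Defs.image T K y) ->
  forall x, K x <-> B (T x).
Proof.
move=> T_inj T_V K_eq x; split => [Kx|BTx].
  by case: (proj2 (K_eq (T x)) (ex_intro _ x (conj Kx erefl))).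
have [x' [Kx' E]] := proj1 (K_eq (T x)) (conj (proj2 (T_V _) (ex_intro _ x erefl)) BTx).
by rewrite -(T_inj _ _ E).
Qed.

Lemma pulled_back_planes {m N} {B : vset N} {K1 K2 : vset m} {T1 T2 : vec m -> vec N}
    {u1 p h2 q : vec m} :
  is_linear T1 -> is_linear T2 ->
  (forall x, K1 x <-> B (T1 x)) -> (forall x, K2 x <-> B (T2 x)) ->
  T1 u1 = T2 h2 -> T1 p = T2 q ->
  forall s t, K1 (vadd (vscale s u1) (vscale t p)) <-> K2 (vadd (vscale s h2) (vscale t q)).
Proof.
move=> [T1_add T1_scale] [T2_add T2_scale] K1_B K2_B Tu Tp s t.
by rewrite K1_B K2_B T1_add T2_add !T1_scale !T2_scale Tu Tp.
Qed.

Lemma ellipsoid_of_ball_image {m N} {T : vec m -> vec N} {K : vset N} {K' : vset m} :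
  is_linear T -> injective T -> (forall y, K y <-> Defs.image T K' y) ->
  ball_image K' -> is_ellipsoid m N K.
Proof.
move=> [T_add T_scale] T_inj K_eq [S [[S_add S_scale] [S_inj K'_eq]]].
have add0 : forall w : vec N, vadd w vzero = w.
  by move=> w; apply: functional_extensionality => i; rewrite /vadd /vzero; ring.
exists (fun y => T (S y)), vzero; split; [split|split].
- by move=> x y; rewrite S_add T_add.
- by move=> c x; rewrite S_scale T_scale.
- by move=> x y /T_inj /S_inj.
- move=> y; rewrite K_eq; split.
    by move=> [x [/K'_eq [z [z_le1 <-]] <-]]; exists z; rewrite add0.
  by move=> [z [z_le1 <-]]; exists (S z); rewrite add0; split => //; apply/K'_eq; exists z.
Qed.

Theorem mainTheorem12 (n : nat) (B : vset n.+1) (G1 G2 L1 L2 H1 H2 : vset n.+1) :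
  (4 <= n)%coq_nat ->
  sym_convex_body B ->
  lin_hyperplane G1 -> lin_hyperplane G2 ->
  ~ (forall x, G1 x <-> G2 x) ->
  affine_sym_body_of_revolution n n.+1 G1 (fun x => G1 x /\ B x) L1 H1 ->
  affine_sym_body_of_revolution n n.+1 G2 (fun x => G2 x /\ B x) L2 H2 ->
  (forall x, L1 x -> H2 x) ->
  is_ellipsoid n n.+1 (fun x => G1 x /\ B x).
Proof.
move=> /leP n_ge4 _ _ _ _
  [T1 [K1 [L1' [H1' [T1_lin [T1_inj [T1_G [K1_body [K1_ax [K1_eq [L1_eq _]]]]]]]]]]]
  [T2 [K2 [L2' [H2' [T2_lin [T2_inj [T2_G [K2_body [K2_ax [K2_eq [_ H2_eq]]]]]]]]]]] L1_H2.
case: K1_ax => u1 [u1_nz [L1_u [_ K1_sec]]].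
case: K2_ax => u2 [u2_nz [_ [H2_u K2_sec]]].
have K1_B := section_preimage T1_inj T1_G K1_eq.
have K2_B := section_preimage T2_inj T2_G K2_eq.
(* T1 u1 spans L1, which lies in H2 = T2(u2^perp). *)
have [h2 [h2_orth Th2]] : exists h2, dot h2 u2 = 0 /\ T1 u1 = T2 h2.
  have : L1 (T1 u1).
    apply/L1_eq; exists u1; split => //; apply/L1_u; exists 1.
    by apply: functional_extensionality => i; rewrite /vscale; ring.
  by move/L1_H2/H2_eq => [h [/H2_u h_orth Th]]; exists h.
have h2_nz : h2 <> vzero.
  by move=> h0; apply: (linear_injective_nz T1_lin T1_inj u1_nz); rewrite Th2 h0 linear_zero.
(* Since n >= 4 the slices share a direction orthogonal to both axes. *)
have [p [q [p_nz [q_nz [p_orth [q_orth Tpq]]]]]] :=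
  common_orthogonal_direction u1 u2 T1_lin T1_inj T2_lin T2_inj ltac:(lia).
(* The plane (u1, p) of K1 is the plane (h2, q) of the round central section of K2. *)
have [r K2_round] := central_section_ball K2_sec (sym_convex_body_zero K2_body).
apply: (ellipsoid_of_ball_image T1_lin T1_inj K1_eq).
apply: (round_plane_section_ball_image (C := dot h2 q) (r := r) u1_nz K1_sec
          (proj1 (proj2 (proj2 K1_body))) p_nz p_orth (dot_pos _ h2_nz) (dot_pos _ q_nz)).
move=> s t; rewrite (pulled_back_planes T1_lin T2_lin K1_B K2_B Th2 Tpq) K2_round.
  by rewrite dot_plane.
by rewrite dot_addl !dot_scalel h2_orth q_orth; ring.
Qed.
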